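(* Let $\mathcal{A}$ be a fully probabilistic finite automaton, $\varphi \subseteq CRun(\mathcal{A})$ a predicate and $\mathcal{O}: CRun(\mathcal{A}) \to Obs$ a surjective observation function. Then: (1) $0 \leq \mathrm{PO}^A_\ell(\mathcal{A},\varphi,\mathcal{O}) \leq 1$ and $0 \leq \mathrm{PO}^S_\ell(\mathcal{A},\varphi,\mathcal{O}) \leq 1$. (2) $\mathrm{PO}^A_\ell(\mathcal{A},\varphi,\mathcal{O}) = 0$ if and only if $\varphi$ is opaque on $\mathit{unProb}(\mathcal{A})$ with respect to $\mathit{unProb}(\mathcal{O})$; and $\mathrm{PO}^S_\ell(\mathcal{A},\varphi,\mathcal{O}) = 0$ if and only if $\varphi$ is symmetrically opaque on $\mathit{unProb}(\mathcal{A})$ with respect to $\mathit{unProb}(\mathcal{O})$. (3) $\mathrm{PO}^A_\ell(\mathcal{A},\varphi,\mathcal{O}) = 1$ if and only if $\varphi = CRun(\mathcal{A})$; and $\mathrm{PO}^S_\ell(\mathcal{A},\varphi,\mathcal{O}) = 1$ if and only if $H(\mathbf{1}_{\varphi} \mid \mathcal{O}) = 0$.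
   Context: A fully probabilistic finite automaton (FPFA) is a tuple $\langle \Sigma, Q, \Delta, q_0\rangle$ with $\Sigma$ a finite alphabet, $Q$ a finite set of states, $q_0$ the initial state, and $\Delta: Q \to ((\Sigma\times Q)\uplus\{\mathrm{stop}\} \to [0,1])$ where $\mathrm{stop}$ is a special termination action, such that for each $q$, $\Delta(q)$ is a probability distribution and from every state there is a positive-probability path to a final state (a state $q$ with $\Delta(q)(\mathrm{stop})>0$). A run is a finite sequence $q_0 \xrightarrow{a_1} q_1 \cdots \xrightarrow{a_n} q_n$ with $\Delta(q_{i-1})(a_i,q_i)>0$; a complete run is $\rho\cdot\mathrm{stop}$ with $\Delta(q_n)(\mathrm{stop})>0$; $CRun(\mathcal{A})$ is the set of complete runs from $q_0$. The probability of a complete run is defined by $\mathbf{P}(q\,\mathrm{stop}) = \Delta(q)(\mathrm{stop})$ and $\mathbf{P}(q\xrightarrow{a}\rho) = \Delta(q)(a,r)\cdot\mathbf{P}(\rho)$ with $r$ the first state of $\rho$; this is a distribution on $CRun(\mathcal{A})$. $\mathbf{1}_\varphi$ and $\mathcal{O}$ are viewed as random variables on $CRun(\mathcal{A})$. Liberal probabilistic opacity: $\mathrm{PO}^A_\ell(\mathcal{A},\varphi,\mathcal{O}) = \sum_{o\in Obs,\ \mathcal{O}^{-1}(o)\subseteq\varphi} \mathbf{P}(\mathcal{O}=o)$; liberal probabilistic symmetrical opacity: $\mathrm{PO}^S_\ell(\mathcal{A},\varphi,\mathcal{O}) = \mathrm{PO}^A_\ell(\mathcal{A},\varphi,\mathcal{O})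 + \mathrm{PO}^A_\ell(\mathcal{A},\overline\varphi,\mathcal{O})$. $\mathit{unProb}(\mathcal{A})$ is the nondeterministic finite automaton with transitions $\{(q,a,r) : \Delta(q)(a,r)>0\}$, initial state $q_0$, and final states $\{q : \Delta(q)(\mathrm{stop})>0\}$; $\mathit{unProb}(\mathcal{O})(q_0\xrightarrow{a_1}\cdots q_n) = \mathcal{O}(q_0\xrightarrow{a_1}\cdots q_n\,\mathrm{stop})$. A predicate $\varphi$ is opaque for $\mathcal{O}$ if for every $o\in Obs$, $\mathcal{O}^{-1}(o)\not\subseteq\varphi$; it is symmetrically opaque if moreover $\mathcal{O}^{-1}(o)\not\subseteq\overline\varphi$ for every $o$. $H(\cdot\mid\cdot)$ is conditional Shannon entropy (base-2 logarithm). *)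

From HB Require Import structures.
From mathcomp Require Import all_boot all_order all_algebra.
From mathcomp Require Import all_classical all_reals.
From mathcomp Require Import ereal esum exp.

Set Implicit Arguments.
Unset Strict Implicit.
Unset Printing Implicit Defensive.

Import Order.TTheory GRing.Theory Num.Theory.
Local Open Scope ring_scope.
Local Open Scope classical_set_scope.

Section FPFA.
Variables (R : realType) (Sigma Q : finType).

(* A run q0 -a1-> q1 ... -an-> qn is encoded by q0 (stored in the automaton)
   and the sequence [:: (a1,q1); ...; (an,qn)].  The complete run
   rho . stop is encoded by the same sequence (the terminating action stop is
   implicit).  Transition distributions: Delta q (Some (a,r)) = Delta(q)(a,r),
   Delta q None = Delta(q)(stop). *)
Definition run := seq (Sigma * Q).

Definition lastq (q : Q) (s : run) : Q := last q (map snd s).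

Fixpoint pos_path (Delta : Q -> option (Sigma * Q) -> R) (q : Q) (s : run) : bool :=
  match s with
  | [::] => true
  | (a, r) :: s' => (0 < Delta q (Some (a, r))) && pos_path Delta r s'
  end.

Definition is_final (Delta : Q -> option (Sigma * Q) -> R) (q : Q) : bool :=
  0 < Delta q None.

Record fpfa := FPFA {
  q0 : Q;
  Delta : Q -> option (Sigma * Q) -> R;
  Delta_ge0 : forall q x, 0 <= Delta q x;
  Delta_sum1 : forall q, \sum_(x : option (Sigma * Q)) Delta q x = 1;
  Delta_live : forall q, exists s : run, pos_path Delta q s && is_final Delta (lastq q s)
}.

Definition CRun (A : fpfa) : set run :=
  [set s | pos_path (Delta A) (q0 A) s && is_final (Delta A) (lastq (q0 A) s)].

Fixpoint prob_from (Delta : Q -> option (Sigma * Q) -> R) (q : Q) (s : run) : R :=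
  match s with
  | [::] => Delta q None
  | (a, r) :: s' => Delta q (Some (a, r)) * prob_from Delta r s'
  end.

Definition Prob (A : fpfa) (s : run) : R := prob_from (Delta A) (q0 A) s.

Definition PrS (A : fpfa) (S : set run) : \bar R :=
  \esum_(s in CRun A `&` S) (Prob A s)%:E.

Variable Obs : choiceType.

Definition PrObs (A : fpfa) (O : run -> Obs) (o : Obs) : \bar R :=
  PrS A [set s | O s = o].

Definition preim (A : fpfa) (O : run -> Obs) (o : Obs) : set run :=
  CRun A `&` [set s | O s = o].

Definition complC (A : fpfa) (phi : set run) : set run := CRun A `\` phi.

Definition POA (A : fpfa) (phi : set run) (O : run -> Obs) : \bar R :=
  \esum_(o in [set o | preim A O o `<=` phi]) PrObs A O o.

Definition POS (A : fpfa) (phi : set run) (O : run -> Obs) : \bar R :=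
  (POA A phi O + POA A (complC A phi) O)%E.

Record nfa := NFA {
  ninit : Q;
  ntrans : Q -> Sigma -> Q -> bool;
  nfinal : pred Q
}.

Fixpoint nfa_path (N : nfa) (q : Q) (s : run) : bool :=
  match s with
  | [::] => true
  | (a, r) :: s' => ntrans N q a r && nfa_path N r s'
  end.

Definition accRun (N : nfa) : set run :=
  [set s | nfa_path N (ninit N) s && nfinal N (lastq (ninit N) s)].

Definition unProb (A : fpfa) : nfa :=
  NFA (q0 A) (fun q a r => 0 < Delta A q (Some (a, r))) (fun q => 0 < Delta A q None).

(* unProb(O)(q0 -a1-> ... qn) = O(q0 -a1-> ... qn stop); with our encoding
   the run rho and the complete run rho.stop have the same representation. *)
Definition unProbObs (O : run -> Obs) : run -> Obs := fun s => O s.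

Definition opaque (N : nfa) (phi : set run) (O : run -> Obs) : Prop :=
  forall o : Obs, ~ (accRun N `&` [set s | O s = o] `<=` phi).

Definition sym_opaque (N : nfa) (phi : set run) (O : run -> Obs) : Prop :=
  opaque N phi O /\
  forall o : Obs, ~ (accRun N `&` [set s | O s = o] `<=` accRun N `\` phi).

Definition log2 (x : R) : R := ln x / ln 2.

Definition ind (phi : set run) (s : run) : bool := `[< phi s >].

Definition PrJoint (A : fpfa) (phi : set run) (O : run -> Obs) (b : bool) (o : Obs) : R :=
  fine (PrS A [set s | ind phi s = b /\ O s = o]).

Definition ent_term (p q : R) : R := if p == 0 then 0 else - (p * log2 (p / q)).

Definition condH (A : fpfa) (phi : set run) (O : run -> Obs) : \bar R :=
  \esum_(o in [set: Obs])
     (\sum_(b : bool) ent_term (PrJoint A phi O b o) (fine (PrObs A O o)))%:E.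

End FPFA.

From Pilot Require Import Defs.
From HB Require Import structures.
From mathcomp Require Import all_boot all_order all_algebra.
From mathcomp Require Import all_classical all_reals.
From mathcomp Require Import ereal esum exp sequences topology normedtype.
From mathcomp Require Import lra.

Import Order.TTheory GRing.Theory Num.Theory numFieldNormedType.Exports.
Local Open Scope ring_scope.
Local Open Scope classical_set_scope.

(* Let [survive k q] be the probability of performing k transitions from q without
   stopping, so that the runs of length at most k carry mass [1 - survive k.+1 q0].
   Liveness gives every state a complete run of positive probability, hence a uniform
   bound [survive K q <= c < 1]; iterating the one-step operator yields
   [survive (n * K) q <= c ^+ n], so the run measure has total mass 1.
   Write [leaks psi] for the observations o with O^-1(o) included in psi. Then PO^A is
   the probability of O^-1(leaks phi), and PO^S that of O^-1 of the disjoint union of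
   [leaks phi] and [leaks (not phi)]. Every complete run has positive probability and O
   is onto, so such an event has probability 0 iff the set of observations is empty,
   and 1 iff it is all of Obs. Finally, the contribution of o to H(1_phi | O) is the
   entropy of the pair P(phi, o), P(not phi, o), which vanishes iff one of them is 0,
   i.e. iff o leaks phi or its complement. *)

Set Implicit Arguments.
Unset Strict Implicit.
Unset Printing Implicit Defensive.

Lemma sum_option (R : nmodType) (T : finType) (F : option T -> R) :
  \sum_(x : option T) F x = F None + \sum_(x : T) F (Some x).
Proof.
have -> : index_enum (option T) = None :: [seq Some x | x <- index_enum T].
  by rewrite /index_enum !unlock /= /option_enum; rewrite unlock.
by rewrite big_cons big_map.
Qed.

Lemma fin_pos_lbound (R : realDomainType) (T : finType) (f : T -> R) :
  (forall t, 0 < f t) -> exists2 eps, 0 < eps & forall t, eps <= f t.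
Proof.
move=> f_gt0.
suff [eps eps_gt0 le_eps] :
    exists2 eps, 0 < eps & forall t, t \in index_enum T -> eps <= f t.
  by exists eps => // t; apply: le_eps; rewrite mem_index_enum.
elim: (index_enum T) => [|t s [eps eps_gt0 le_eps]]; first by exists 1.
exists (Num.min eps (f t)); first by rewrite lt_min eps_gt0 f_gt0.
by move=> u /predU1P[->|us]; rewrite ge_min ?lexx ?orbT ?le_eps.
Qed.

Lemma exists_expr_lt (R : realType) (c eps : R) :
  0 <= c < 1 -> 0 < eps -> exists n : nat, c ^+ n < eps.
Proof.
move=> /andP[c_ge0 c_lt1] eps_gt0.
have norm_c : `|c| < 1 by rewrite ger0_norm.
have [N _ ltN] := cvgr0_norm_lt (fun n : nat => c ^+ n) (cvg_expr norm_c) _ eps_gt0.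
by exists N; have := ltN N (leqnn N); rewrite /= ger0_norm ?exprn_ge0.
Qed.

Lemma esum_ge_term (R : realType) (T : choiceType) (I : set T) (a : T -> \bar R) t :
  I t -> (0 <= a t)%E -> (a t <= \esum_(i in I) a i)%E.
Proof.
move=> It a_ge0; apply: esum_ge; exists [set t]; first by split; [exact: finite_set1|move=> x ->].
by rewrite fsbig_set1.
Qed.

Lemma esum_eq0P (R : realType) (T : choiceType) (I : set T) (a : T -> \bar R) :
  (forall i, I i -> 0 <= a i)%E ->
  \esum_(i in I) a i = 0%E <-> forall i, I i -> a i = 0%E.
Proof.
move=> a_ge0; split => [esum0 i Ii|]; last exact: esum1.
apply/eqP; rewrite eq_le a_ge0 // andbT -esum0.
exact: esum_ge_term Ii (a_ge0 i Ii).
Qed.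

Lemma fine_eq0P (R : numDomainType) (x : \bar R) : x \is a fin_num -> fine x = 0 <-> x = 0%E.
Proof. by move=> fx; split => [x0|->] //; rewrite -(fineK fx) x0. Qed.

Section BinaryEntropy.
Variable R : realType.

Lemma ln2_gt0 : 0 < ln (2 : R).
Proof. by apply: ln_gt0; lra. Qed.

Lemma ent_term_ge0 (p P : R) : 0 <= p -> p <= P -> 0 < P -> 0 <= ent_term p P.
Proof.
move=> p_ge0 le_pP P_gt0; rewrite /ent_term; case: eqP => // /eqP p_neq0.
have p_gt0 : 0 < p by rewrite lt_def p_neq0 p_ge0.
have ln_le0 : ln (p / P) <= 0 by apply: ln_le0; rewrite ler_pdivrMr // mul1r.
by rewrite oppr_ge0 mulr_ge0_le0 // /log2 mulr_le0_ge0 // invr_ge0 ltW ?ln2_gt0.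
Qed.

Lemma ent_term_eq0 (p P : R) : 0 <= p -> p <= P -> 0 < P ->
  ent_term p P = 0 <-> p = 0 \/ p = P.
Proof.
move=> p_ge0 le_pP P_gt0; rewrite /ent_term; case: eqP => [->|/eqP p_neq0].
  by split => //; left.
have p_gt0 : 0 < p by rewrite lt_def p_neq0 p_ge0.
split => [|[/eqP|->]]; last 2 first.
- by rewrite (negPf p_neq0).
- by rewrite divff ?gt_eqF // /log2 ln1 mul0r mulr0 oppr0.
move/eqP; rewrite oppr_eq0 mulf_eq0 (negPf p_neq0) /log2 mulf_eq0 invr_eq0.
rewrite (gt_eqF ln2_gt0) orbF ln_eq0 ?divr_gt0 // => /eqP pP1.
by right; rewrite -(divfK (lt0r_neq0 P_gt0) p) pP1 mul1r.
Qed.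

Lemma ent_term_pair_ge0 (p q : R) : 0 <= p -> 0 <= q -> 0 < p + q ->
  0 <= ent_term p (p + q) + ent_term q (p + q).
Proof. by move=> p_ge0 q_ge0 pq_gt0; rewrite addr_ge0 // ent_term_ge0 //; lra. Qed.

Lemma ent_term_pair_eq0 (p q : R) : 0 <= p -> 0 <= q -> 0 < p + q ->
  ent_term p (p + q) + ent_term q (p + q) = 0 <-> p = 0 \/ q = 0.
Proof.
move=> p_ge0 q_ge0 pq_gt0.
have le_p : p <= p + q by lra.
have le_q : q <= p + q by lra.
have ent_p := ent_term_eq0 p_ge0 le_p pq_gt0.
have ent_q := ent_term_eq0 q_ge0 le_q pq_gt0.
split => [/eqP|pq0].
  rewrite paddr_eq0 ?ent_term_ge0 // => /andP[/eqP/ent_p[p0|pq] _]; first by left.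
  by right; lra.
rewrite (proj2 ent_p) ?(proj2 ent_q) ?addr0 //.
all: case: pq0 => ->; rewrite ?add0r ?addr0; first [by left | by right].
Qed.

End BinaryEntropy.

Section Survival.
Variables (R : realType) (Sigma Q : finType) (A : fpfa R Sigma Q).
Local Notation D := (Delta A).
Local Notation run := (run Sigma Q).

Definition step (f : Q -> R) (q : Q) : R := \sum_(x : Sigma * Q) D q (Some x) * f x.2.

Definition stopP (q : Q) : R := D q None.

Definition survive k : Q -> R := iter k step (fun _ => 1).

Lemma iter_step_add k f g q :
  iter k step (fun r => f r + g r) q = iter k step f q + iter k step g q.
Proof.
elim: k q => [|k IH] q //=.
rewrite (_ : iter k step _ = fun r => iter k step f r + iter k step g r); last exact: funext.
by rewrite /step -big_split; apply: eq_bigr => x _; rewrite mulrDr.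
Qed.

Lemma iter_step_scale k c f q : iter k step (fun r => c * f r) q = c * iter k step f q.
Proof.
elim: k q => [|k IH] q //=.
rewrite (_ : iter k step _ = fun r => c * iter k step f r); last exact: funext.
by rewrite /step mulr_sumr; apply: eq_bigr => x _; rewrite mulrCA.
Qed.

Lemma iter_step_le k f g :
  (forall q, f q <= g q) -> forall q, iter k step f q <= iter k step g q.
Proof.
move=> le_fg; elim: k => [|k IH] q //=.
by apply: ler_sum => x _; rewrite ler_wpM2l ?Delta_ge0.
Qed.

Lemma iter_step_ge0 k f : (forall q, 0 <= f q) -> forall q, 0 <= iter k step f q.
Proof.
move=> f_ge0; elim: k => [|k IH] q //=.
by apply: sumr_ge0 => x _; rewrite mulr_ge0 ?Delta_ge0.
Qed.

Lemma stopP_add_step1 q : stopP q + step (fun _ => 1) q = 1.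
Proof.
rewrite -[RHS](Delta_sum1 A q) sum_option; congr (_ + _).
by apply: eq_bigr => x _; rewrite mulr1.
Qed.

Lemma surviveS k q : survive k q = iter k step stopP q + survive k.+1 q.
Proof.
rewrite /survive iterSr -iter_step_add.
by congr (iter k step _ q); apply: funext => r; rewrite stopP_add_step1.
Qed.

Lemma survive_ge0 k q : 0 <= survive k q.
Proof. exact: iter_step_ge0. Qed.

Lemma iter_step_stopP_ge0 k q : 0 <= iter k step stopP q.
Proof. by apply: iter_step_ge0 => r; apply: Delta_ge0. Qed.

Lemma survive_antimono m n q : (m <= n)%N -> survive n q <= survive m q.
Proof.
move=> /subnK <-; elim: (n - m)%N => [|d IH] //.
by apply: le_trans IH; rewrite addSn (surviveS (d + m)) lerDr iter_step_stopP_ge0.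
Qed.

Fixpoint runs_of_size k : seq run :=
  if k is k'.+1 then [seq x :: s | x <- index_enum (Sigma * Q)%type, s <- runs_of_size k']
  else [:: [::]].

Lemma mem_runs_of_size k s : (s \in runs_of_size k) = (size s == k).
Proof.
elim: k s => [|k IH] [|x s] //=.
  by apply/negbTE/allpairsP => -[p [_ _]].
rewrite eqSS -IH; apply/allpairsP/idP => [[[y t] [/= _ ht [_ ->]]]|s_k] //.
by exists (x, s); split => //=; exact: mem_index_enum.
Qed.

Lemma uniq_runs_of_size k : uniq (runs_of_size k).
Proof.
elim: k => [|k IH] //=.
apply: allpairs_uniq_dep => //; first exact: index_enum_uniq.
by move=> [x1 s1] [x2 s2] _ _ /= [-> ->].
Qed.

Lemma sum_runs_of_size k q :
  \sum_(s <- runs_of_size k) prob_from D q s = iter k step stopP q.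
Proof.
elim: k q => [|k IH] q /=; first by rewrite big_seq1.
rewrite big_allpairs_dep /step; apply: eq_bigr => -[a r] _.
by rewrite -mulr_sumr IH.
Qed.

Fixpoint runs_upto k : seq run :=
  if k is k'.+1 then runs_upto k' ++ runs_of_size k'.+1 else runs_of_size 0.

Lemma runs_uptoS k : runs_upto k.+1 = runs_upto k ++ runs_of_size k.+1.
Proof. by []. Qed.

Lemma mem_runs_upto k s : (s \in runs_upto k) = (size s <= k)%N.
Proof.
elim: k => [|k IH]; first by case: s.
by rewrite runs_uptoS mem_cat IH mem_runs_of_size [in RHS]leq_eqVlt ltnS orbC.
Qed.

Lemma uniq_runs_upto k : uniq (runs_upto k).
Proof.
elim: k => [|k IH]; first exact: (uniq_runs_of_size 0).
rewrite runs_uptoS cat_uniq IH uniq_runs_of_size andbT.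
by apply/hasPn => s; rewrite mem_runs_of_size mem_runs_upto => /eqP ->; rewrite ltnn.
Qed.

Lemma sum_runs_upto k q : \sum_(s <- runs_upto k) prob_from D q s = 1 - survive k.+1 q.
Proof.
suff <- : \sum_(s <- runs_upto k) prob_from D q s + survive k.+1 q = 1 by rewrite addrK.
elim: k => [|k IH]; first by rewrite (sum_runs_of_size 0) -surviveS.
by rewrite runs_uptoS big_cat sum_runs_of_size -addrA -surviveS.
Qed.

Lemma prob_from_ge0 q s : 0 <= prob_from D q s.
Proof. by elim: s q => [|[a r] s IH] q /=; rewrite ?mulr_ge0 ?Delta_ge0. Qed.

Lemma prob_from_gt0E q s :
  (0 < prob_from D q s) = pos_path D q s && is_final D (lastq q s).
Proof.
elim: s q => [|[a r] s IH] q //=.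
by rewrite mulr_ge0_gt0 ?Delta_ge0 ?prob_from_ge0 // IH andbA.
Qed.

Lemma survive_size_le q s : survive (size s).+1 q <= 1 - prob_from D q s.
Proof.
have := sum_runs_upto (size s) q.
rewrite (bigD1_seq s) ?uniq_runs_upto ?mem_runs_upto //=.
have : 0 <= \sum_(t <- runs_upto (size s) | t != s) prob_from D q t.
  by apply: sumr_ge0 => t _; apply: prob_from_ge0.
lra.
Qed.

Lemma survive_unif_lt1 : exists K c, 0 <= c < 1 /\ forall q, survive K q <= c.
Proof.
have [s live] := fin_all_exists (Delta_live A).
have s_gt0 q : 0 < prob_from D q (s q) by rewrite prob_from_gt0E live.
have [eps eps_gt0 le_eps] := fin_pos_lbound s_gt0.
have le_surv q : survive (\max_q size (s q)).+1 q <= 1 - eps.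
  have le_max : ((size (s q)).+1 <= (\max_q size (s q)).+1)%N by rewrite ltnS leq_bigmax.
  apply: le_trans (survive_antimono q le_max) _.
  by apply: le_trans (survive_size_le q (s q)) _; rewrite lerB.
exists (\max_q size (s q)).+1, (1 - eps); split => //.
rewrite ltrBlDr ltrDl eps_gt0 andbT.
exact: le_trans (survive_ge0 _ (q0 A)) (le_surv (q0 A)).
Qed.

Lemma survive_geom K c : (forall q, survive K q <= c) -> forall n q, survive (n * K) q <= c ^+ n.
Proof.
move=> le_c; elim=> [|n IH] q; first by rewrite expr0.
have le_c1 r : survive K r <= c * 1 by rewrite mulr1.
rewrite mulSnr /survive iterD exprSr [_ * c]mulrC.
apply: le_trans (iter_step_le (n * K) le_c1 q) _.
rewrite iter_step_scale ler_wpM2l //; last exact: IH.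
exact: le_trans (survive_ge0 K q) (le_c q).
Qed.

Lemma survive_vanish eps : 0 < eps -> exists k, forall q, survive k q < eps.
Proof.
move=> eps_gt0; have [K [c [c01 le_c]]] := survive_unif_lt1.
have [n lt_eps] := exists_expr_lt c01 eps_gt0.
by exists (n * K)%N => q; apply: le_lt_trans (survive_geom le_c n q) lt_eps.
Qed.

End Survival.

Section RunMeasure.
Variables (R : realType) (Sigma Q : finType) (A : fpfa R Sigma Q).
Local Notation run := (run Sigma Q).

Lemma Prob_ge0 s : 0 <= Prob A s.
Proof. exact: prob_from_ge0. Qed.

Lemma Prob_gt0E s : (0 < Prob A s) = `[< CRun A s >].
Proof. by rewrite prob_from_gt0E; apply/idP/asboolP. Qed.

Lemma Prob_eq0 s : Prob A s = 0 <-> ~ CRun A s.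
Proof.
split => [P0 Cs|notC]; first by move: (Prob_gt0E s); rewrite P0 ltxx asboolT.
by apply/eqP; rewrite eq_le Prob_ge0 andbT leNgt Prob_gt0E; apply/asboolPn.
Qed.

Lemma esum_Prob_ge0 (S : set run) : (0 <= \esum_(s in S) (Prob A s)%:E)%E.
Proof. by apply: esum_ge0 => s _; rewrite lee_fin Prob_ge0. Qed.

Lemma PrSE (S : set run) : PrS A S = \esum_(s in S) (Prob A s)%:E.
Proof.
rewrite /PrS esum_mkcondl; apply: eq_esum => s _.
case: (boolP (s \in CRun A)) => // /negP notC.
by rewrite (proj2 (Prob_eq0 s)) // => Cs; apply: notC; rewrite in_setE.
Qed.

Lemma esum_Prob_setT_le1 : (\esum_(s in [set: run]) (Prob A s)%:E <= 1)%E.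
Proof.
apply: ge_ereal_sup => _ [X [finX _] <-].
have [t ->] := (finite_seqP X).1 finX.
set k := (\max_(u <- t) size u)%N.
apply: (@le_trans _ _ (\sum_(s \in [set` runs_upto Sigma Q k]) (Prob A s)%:E)%E).
  apply: lee_fsum_nneg_subset; [exact: finite_seq|exact: finite_seq| |].
    move=> u; rewrite !inE /= => tu; rewrite mem_runs_upto.
    exact: (@leq_bigmax_seq _ t xpredT size u tu).
  by move=> u _; rewrite lee_fin Prob_ge0.
rewrite -fsbig_seq ?uniq_runs_upto // sumEFin lee_fin sum_runs_upto.
by rewrite lerBlDr lerDl survive_ge0.
Qed.

Lemma esum_Prob_setT : \esum_(s in [set: run]) (Prob A s)%:E = 1%E.
Proof.
have le_sum k : ((1 - survive A k.+1 (q0 A))%:E <= \esum_(s in [set: run]) (Prob A s)%:E)%E.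
  apply: esum_ge; exists [set` runs_upto Sigma Q k]; first by split; [exact: finite_seq|].
  by rewrite -fsbig_seq ?uniq_runs_upto // sumEFin sum_runs_upto.
have := esum_Prob_setT_le1; have := esum_Prob_ge0 [set: run].
set S := esum _ _ in le_sum * => S_ge0 S_le1.
have finS : S \is a fin_num by rewrite ge0_fin_numE // (le_lt_trans S_le1) ?ltry.
rewrite -(fineK finS) in le_sum S_le1 *; apply/eqP; rewrite eq_le S_le1 /= lee_fin.
rewrite leNgt; apply/negP => S_lt1.
have [k lt_surv] : exists k, forall q, survive A k q < 1 - fine S.
  by apply: survive_vanish; rewrite subr_gt0.
have := le_sum k; have := lt_surv (q0 A); have := survive_antimono A (q0 A) (leqnSn k).
rewrite lee_fin; lra.
Qed.

Lemma esum_Prob_le1 (S : set run) : (\esum_(s in S) (Prob A s)%:E <= 1)%E.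
Proof.
rewrite -esum_Prob_setT (esumID S setT); last by move=> s _; rewrite lee_fin Prob_ge0.
by rewrite setTI leeDl // esum_Prob_ge0.
Qed.

Lemma esum_Prob_fin_num (S : set run) : \esum_(s in S) (Prob A s)%:E \is a fin_num.
Proof. by rewrite ge0_fin_numE ?esum_Prob_ge0 // (le_lt_trans (esum_Prob_le1 S)) ?ltry. Qed.

Lemma esum_Prob_eq0 (S : set run) :
  \esum_(s in S) (Prob A s)%:E = 0%E <-> forall s, S s -> ~ CRun A s.
Proof.
rewrite esum_eq0P => [|s _]; last by rewrite lee_fin Prob_ge0.
by split => h s /h; [case=> /Prob_eq0 | move/Prob_eq0 ->].
Qed.

Lemma esum_PrObs (Obs : choiceType) (O : run -> Obs) (U : set Obs) :
  \esum_(o in U) PrObs A O o = \esum_(s in O @^-1` U) (Prob A s)%:E.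
Proof.
rewrite /PrObs; under eq_esum do rewrite PrSE.
rewrite esum_esum; last by move=> *; rewrite lee_fin Prob_ge0.
rewrite -(esum_image (U `*`` fun o => [set s | O s = o]) snd (fun s => (Prob A s)%:E)).
  congr esum; apply/seteqP; split.
    by move=> x [[o s] [/= Uo Os] /= <-]; rewrite /= Os.
  by move=> x /= Ux; exists (O x, x).
move=> [o1 s1] [o2 s2]; rewrite !inE /= => -[_ O1] [_ O2] s12.
by rewrite -O1 -O2 /= s12.
Qed.

Lemma accRun_unProb : accRun (unProb A) = CRun A.
Proof.
have path_unProb q (s : run) : nfa_path (unProb A) q s = pos_path (Delta A) q s.
  by elim: s q => [|[a r] s IH] q //=; rewrite IH.
by apply: funext => s; rewrite /accRun /CRun /= path_unProb.
Qed.

End RunMeasure.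

Section Opacity.
Variables (R : realType) (Sigma Q : finType) (Obs : choiceType).
Variables (A : fpfa R Sigma Q) (O : run Sigma Q -> Obs).
Local Notation run := (run Sigma Q).
Local Notation Pr U := (\esum_(s in O @^-1` U) (Prob A s)%:E).

Definition leaks (psi : set run) : set Obs := [set o | Defs.preim A O o `<=` psi].

Lemma POAE psi : POA A psi O = Pr (leaks psi).
Proof. exact: esum_PrObs. Qed.

Lemma opaque_unProbE phi : opaque (unProb A) phi (unProbObs O) <-> leaks phi = set0.
Proof.
rewrite /opaque accRun_unProb; split => [opq|leak0 o sub].
  by apply/seteqP; split => // o; apply: opq.
by move: (sub : leaks phi o); rewrite leak0.
Qed.

Lemma sym_opaque_unProbE phi :
  sym_opaque (unProb A) phi (unProbObs O) <-> leaks phi `|` leaks (complC A phi) = set0.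
Proof. by rewrite setU_eq0 -!opaque_unProbE /sym_opaque /opaque accRun_unProb. Qed.

Lemma leaks_eqT phi : phi `<=` CRun A -> leaks phi = setT <-> phi = CRun A.
Proof.
move=> phiC; split => [leakT|->]; last by apply/seteqP; split => // o _ s [].
apply/seteqP; split => // s Cs.
have leak_s : leaks phi (O s) by rewrite leakT.
by apply: leak_s; split.
Qed.

Hypothesis O_onto : forall o, exists s, CRun A s /\ O s = o.

Lemma Pr_eq0 U : Pr U = 0%E <-> U = set0.
Proof.
rewrite esum_Prob_eq0; split => [noU|-> s //].
apply/seteqP; split => // o Uo; have [s [Cs Os]] := O_onto o.
by apply: (noU s) => //=; rewrite Os.
Qed.

Lemma Pr_eq1 U : Pr U = 1%E <-> U = setT.
Proof.
split => [Pr1|->]; last by rewrite preimage_setT esum_Prob_setT.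
have PrC0 : Pr (~` U) = 0%E.
  have := esum_Prob_setT A.
  rewrite (esumID (O @^-1` U)); last by move=> *; rewrite lee_fin Prob_ge0.
  rewrite !setTI preimage_setC Pr1.
  set x := esum _ _; have fx : x \is a fin_num by exact: esum_Prob_fin_num.
  rewrite -(fineK fx) -EFinD => -[] x0; congr EFin; lra.
apply/seteqP; split => // o _; apply: contrapT => notUo.
by move: (notUo : (~` U) o); rewrite (proj1 (Pr_eq0 _) PrC0).
Qed.

Lemma leaks_disjoint phi : leaks phi `&` leaks (complC A phi) = set0.
Proof.
apply/seteqP; split => // o [leak_phi leak_nphi]; have [s [Cs Os]] := O_onto o.
have pre_s : Defs.preim A O o s by split.
by have [_] := leak_nphi s pre_s; apply; apply: leak_phi pre_s.
Qed.

Lemma POSE phi : POS A phi O = Pr (leaks phi `|` leaks (complC A phi)).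
Proof.
set U := leaks phi `|` _; rewrite /POS !POAE (esumID (O @^-1` leaks phi) (O @^-1` U)).
- congr (_ + _)%E; congr esum; rewrite preimage_setU; first by rewrite setUK.
  rewrite setIUl setICr set0U setIidl // => s nphi_s phi_s.
  by move: (conj phi_s nphi_s : (leaks phi `&` leaks (complC A phi)) (O s)); rewrite leaks_disjoint.
- by move=> s _; rewrite lee_fin Prob_ge0.
Qed.

Lemma PrJoint_ge0 phi b o : 0 <= PrJoint A phi O b o.
Proof. by rewrite /PrJoint PrSE fine_ge0 ?esum_Prob_ge0. Qed.

Lemma PrJoint_eq0 phi b o :
  PrJoint A phi O b o = 0 <-> forall s, CRun A s -> O s = o -> ind phi s != b.
Proof.
rewrite /PrJoint PrSE fine_eq0P ?esum_Prob_fin_num // esum_Prob_eq0.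
split => [noC s Cs Os|ind_neq s [/eqP ind_b Os] Cs].
  by apply/eqP => ind_b; exact: noC s (conj ind_b Os) Cs.
by move: (ind_neq s Cs Os); rewrite ind_b.
Qed.

Lemma PrJoint_true_eq0 phi o : PrJoint A phi O true o = 0 <-> leaks (complC A phi) o.
Proof.
rewrite PrJoint_eq0; split => [nphi s [Cs Os]|leak s Cs Os].
  by split => //; apply/asboolPn; move: (nphi s Cs Os); rewrite eqb_id.
by rewrite eqb_id; apply/asboolPn; have [] := leak s (conj Cs Os).
Qed.

Lemma PrJoint_false_eq0 phi o : PrJoint A phi O false o = 0 <-> leaks phi o.
Proof.
rewrite PrJoint_eq0; split => [phi_ind s [Cs Os]|leak s Cs Os].
  by apply/asboolP; move: (phi_ind s Cs Os); rewrite eqbF_neg negbK.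
by rewrite eqbF_neg negbK; apply/asboolP/leak.
Qed.

Lemma PrObs_split phi o :
  fine (PrObs A O o) = PrJoint A phi O true o + PrJoint A phi O false o.
Proof.
rewrite /PrObs /PrJoint !PrSE (esumID phi); last by move=> s _; rewrite lee_fin Prob_ge0.
rewrite fineD ?esum_Prob_fin_num //; congr (fine _ + fine _); congr esum.
- apply/seteqP; split => s /= [].
  + by move=> Os phi_s; split => //; apply/asboolP.
  + by move=> /asboolP phi_s Os.
- apply/seteqP; split => s /= [].
  + by move=> Os nphi_s; split => //; apply/negbTE/asboolPn.
  + by move=> /negbT/asboolPn nphi_s Os.
Qed.

Lemma PrJoint_add_gt0 phi o : 0 < PrJoint A phi O true o + PrJoint A phi O false o.
Proof.
rewrite lt_def addr_ge0 ?PrJoint_ge0 // andbT paddr_eq0 ?PrJoint_ge0 //.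
apply/negP => /andP[/eqP/PrJoint_true_eq0 leak_nphi /eqP/PrJoint_false_eq0 leak_phi].
by move: (conj leak_phi leak_nphi : (leaks phi `&` leaks (complC A phi)) o); rewrite leaks_disjoint.
Qed.

Local Notation ent_given phi o :=
  (\sum_(b : bool) ent_term (PrJoint A phi O b o) (fine (PrObs A O o))).

Lemma ent_given_ge0 phi o : 0 <= ent_given phi o.
Proof.
by rewrite big_bool (PrObs_split phi) ent_term_pair_ge0 ?PrJoint_ge0 ?PrJoint_add_gt0.
Qed.

Lemma ent_given_eq0 phi o : ent_given phi o = 0 <-> (leaks phi `|` leaks (complC A phi)) o.
Proof.
rewrite big_bool (PrObs_split phi) ent_term_pair_eq0 ?PrJoint_ge0 ?PrJoint_add_gt0 //.
by rewrite PrJoint_true_eq0 PrJoint_false_eq0; split => -[]; [right|left|right|left].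
Qed.

Lemma condH_eq0 phi : condH A phi O = 0%E <-> leaks phi `|` leaks (complC A phi) = setT.
Proof.
rewrite /condH esum_eq0P => [|o _]; last by rewrite lee_fin ent_given_ge0.
split => [ent0|leakT o _]; last by rewrite (proj2 (ent_given_eq0 phi o)) ?leakT.
by apply/seteqP; split => // o _; apply/ent_given_eq0; case: (ent0 o I).
Qed.

End Opacity.

Unset Implicit Arguments.

Theorem proposition1 (R : realType) (Sigma Q : finType) (Obs : choiceType)
  (A : fpfa R Sigma Q) (phi : set (run Sigma Q)) (O : run Sigma Q -> Obs)
  (hphi : phi `<=` CRun A)
  (hO : forall o : Obs, exists s, CRun A s /\ O s = o) :
  [/\ ((0 <= POA A phi O)%E /\ (POA A phi O <= 1)%E
       /\ (0 <= POS A phi O)%E /\ (POS A phi O <= 1)%E),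
      ((POA A phi O = 0%E <-> opaque (unProb A) phi (unProbObs O))
       /\ (POS A phi O = 0%E <-> sym_opaque (unProb A) phi (unProbObs O))) &
      ((POA A phi O = 1%E <-> phi = CRun A)
       /\ (POS A phi O = 1%E <-> condH A phi O = 0%E))].
Proof.
rewrite (POSE hO) POAE.
split.
- by rewrite !esum_Prob_ge0 !esum_Prob_le1.
- by rewrite !Pr_eq0 // opaque_unProbE sym_opaque_unProbE.
- by rewrite !Pr_eq1 // leaks_eqT // condH_eq0.
Qed.
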